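(* Let $h_{SR_k}, h_{R_kD}, h_{SP}, h_{R_kP}, h_{R_kR_k} \in \mathbb{C}$, $\sigma_D > 0$, $\sigma_{R_k} > 0$, $\zeta \ge 0$, and set $\hat{\zeta} = |h_{R_kR_k}|^2\zeta$, assumed $>0$. Let $\bar{\mathcal{I}}_P > 0$, $P_S^{\max} > 0$, $P_{R_k}^{\max} > 0$. For $p_S, p_{R_k} \ge 0$ define $$G_k = \left[p_S^2|h_{SR_k}|^2 + \zeta p_{R_k}^2|h_{R_kR_k}|^2 + \sigma_{R_k}^2\right]^{-1/2},$$ $$A = h_{SP}\,p_S + h_{R_kP}\sqrt{\zeta}\,p_{R_k},\qquad B = \left(h_{SR_k}p_S + h_{R_kR_k}\sqrt{\zeta}\,p_{R_k} + \frac{\sigma_{R_k}}{\sqrt 2}(1+j)\right)G_k\,h_{R_kP}\,p_{R_k},$$ and $\mathcal{I}^{\mathrm{coh}}_k = (|A| - |B|)^2$. Consider the optimization problem (Problem 4) $$\max_{p_S, p_{R_k}} \ \breve{\mathcal{C}}_k(p_S, p_{R_k}) = \frac{\frac{p_{R_k}^2|h_{R_kD}|^2}{\sigma_D^2}\cdot\frac{p_S^2|h_{SR_k}|^2}{\hat{\zeta}p_{R_k}^2}}{1 + \frac{p_{R_k}^2|h_{R_kD}|^2}{\sigma_D^2} + \frac{p_S^2|h_{SR_k}|^2}{\hat{\zeta}p_{R_k}^2}}$$ subject to $$\mathcal{I}^{\mathrm{coh}}_k \le \bar{\mathcal{I}}_P,\quad 0 \le p_S \le \sqrt{P_S^{\max}},\quad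 0 \le p_{R_k} \le \sqrt{P_{R_k}^{\max}}.$$ Then Problem 4 is not a convex optimization problem in the joint variable $(p_S, p_{R_k})$.
   Context: $j$ is the imaginary unit. A maximization problem is called a convex optimization problem if its objective is a concave function over a convex feasible set. The objective is defined for $p_{R_k} > 0$. The variables $p_S = \sqrt{P_S}$, $p_{R_k} = \sqrt{P_{R_k}}$ are square roots of the transmit powers, and $\mathcal{I}^{\mathrm{coh}}_k$ is the interference at the primary receiver in the coherent scenario after optimal phase regulation at the relay. *)

From Stdlib Require Import Reals.
From Coquelicot Require Import Coquelicot.
Open Scope R_scope.

Definition Gk (hSR hRR : C) (sigmaR zeta pS pR : R) : R :=
  / sqrt (pS^2 * (Cmod hSR)^2 + zeta * pR^2 * (Cmod hRR)^2 + sigmaR^2).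

Definition Acoh (hSP hRP : C) (zeta pS pR : R) : C :=
  (hSP * RtoC pS + hRP * RtoC (sqrt zeta) * RtoC pR)%C.

Definition Bcoh (hSR hRR hRP : C) (sigmaR zeta pS pR : R) : C :=
  ((hSR * RtoC pS + hRR * RtoC (sqrt zeta) * RtoC pR
     + RtoC (sigmaR / sqrt 2) * (1 + Ci))
   * RtoC (Gk hSR hRR sigmaR zeta pS pR) * hRP * RtoC pR)%C.

Definition Icoh (hSR hRR hSP hRP : C) (sigmaR zeta pS pR : R) : R :=
  (Cmod (Acoh hSP hRP zeta pS pR) - Cmod (Bcoh hSR hRR hRP sigmaR zeta pS pR))^2.

Definition Cbreve (hSR hRD hRR : C) (sigmaD zeta pS pR : R) : R :=
  let zetahat := (Cmod hRR)^2 * zeta in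
  let x := pR^2 * (Cmod hRD)^2 / sigmaD^2 in
  let y := pS^2 * (Cmod hSR)^2 / (zetahat * pR^2) in
  (x * y) / (1 + x + y).

(* feasible set of Problem 4, intersected with the domain pR > 0 of the objective *)
Definition feasible (hSR hRR hSP hRP : C) (sigmaR zeta IP PSmax PRmax : R)
    (p : R * R) : Prop :=
  let (pS, pR) := p in
  Icoh hSR hRR hSP hRP sigmaR zeta pS pR <= IP /\
  0 <= pS <= sqrt PSmax /\ 0 < pR <= sqrt PRmax.

Definition convex_set (S : R * R -> Prop) : Prop :=
  forall u v t, S u -> S v -> 0 <= t <= 1 ->
    S (t * fst u + (1 - t) * fst v, t * snd u + (1 - t) * snd v).

Definition concave_on (S : R * R -> Prop) (f : R * R -> R) : Prop :=
  forall u v t, S u -> S v -> 0 <= t <= 1 ->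
    t * f u + (1 - t) * f v <=
    f (t * fst u + (1 - t) * fst v, t * snd u + (1 - t) * snd v).

Definition convex_max_problem (S : R * R -> Prop) (f : R * R -> R) : Prop :=
  convex_set S /\ concave_on S f.

(** On the diagonal [pS = pR = r] the objective equals [a r^2 y / (1 + a r^2 + y)],
    which behaves like the convex function [r^2] near [r = 0]; concavity therefore
    fails at the midpoint of [r] and [3 r] for small [r].  Such diagonal points are
    feasible because the interference is bounded by [(|A| + |B|)^2 = O(r^2)]. *)

From Stdlib Require Import Reals Lra Psatz.
From Coquelicot Require Import Coquelicot.
Open Scope R_scope.

Definition diag_objective (a y r : R) : R := a * r^2 * y / (1 + a * r^2 + y).

Lemma diag_objective_midpoint_lt a y r :
  0 < a -> 0 < y -> 0 < r -> 11 * (a * r^2) < 1 + y ->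
  diag_objective a y (2 * r) < (diag_objective a y r + diag_objective a y (3 * r)) / 2.
Proof.
  intros ha hy hr hsmall; unfold diag_objective.
  set (s := a * r^2) in *; set (M := 1 + y) in *.
  assert (hs : 0 < s) by (apply Rmult_lt_0_compat; [lra | apply pow_lt; lra]).
  replace (a * (2 * r)^2) with (4 * s) by (unfold s; ring).
  replace (a * (3 * r)^2) with (9 * s) by (unfold s; ring).
  replace (1 + s + y) with (M + s) by (unfold M; ring).
  replace (1 + 4 * s + y) with (M + 4 * s) by (unfold M; ring).
  replace (1 + 9 * s + y) with (M + 9 * s) by (unfold M; ring).
  assert (gap : (s * y / (M + s) + 9 * s * y / (M + 9 * s)) / 2 - 4 * s * y / (M + 4 * s)
                = s * y * (2 * M * (M - 11 * s))
                  / (2 * (M + s) * (M + 9 * s) * (M + 4 * s)))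
    by (field; unfold M in *; lra).
  assert (0 < s * y * (2 * M * (M - 11 * s))
              / (2 * (M + s) * (M + 9 * s) * (M + 4 * s))).
  { apply Rdiv_lt_0_compat.
    - apply Rmult_lt_0_compat; [nra|]. unfold M in *; nra.
    - unfold M in *; repeat apply Rmult_lt_0_compat; lra. }
  lra.
Qed.

Lemma Cbreve_diag hSR hRD hRR sigmaD zeta r :
  0 < sigmaD -> 0 < Cmod hRR ^ 2 * zeta -> 0 < r ->
  Cbreve hSR hRD hRR sigmaD zeta r r =
  diag_objective (Cmod hRD ^ 2 / sigmaD ^ 2) (Cmod hSR ^ 2 / (Cmod hRR ^ 2 * zeta)) r.
Proof.
  intros hsD hzhat hr; unfold Cbreve, diag_objective; cbv zeta.
  assert (zeta <> 0) by (intro E; rewrite E in hzhat; lra).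
  assert (Cmod hRR <> 0) by (intro E; rewrite E in hzhat; lra).
  replace (r ^ 2 * Cmod hSR ^ 2 / (Cmod hRR ^ 2 * zeta * r ^ 2))
    with (Cmod hSR ^ 2 / (Cmod hRR ^ 2 * zeta)) by (field; repeat split; lra).
  replace (r ^ 2 * Cmod hRD ^ 2 / sigmaD ^ 2)
    with (Cmod hRD ^ 2 / sigmaD ^ 2 * r ^ 2) by (field; lra).
  reflexivity.
Qed.

Lemma Gk_radicand_ge hSR hRR sigmaR zeta pS pR :
  0 <= zeta ->
  sigmaR ^ 2 <= pS ^ 2 * Cmod hSR ^ 2 + zeta * pR ^ 2 * Cmod hRR ^ 2 + sigmaR ^ 2.
Proof.
  intros hz.
  assert (0 <= pS ^ 2 * Cmod hSR ^ 2) by (apply Rmult_le_pos; apply pow2_ge_0).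
  assert (0 <= zeta * pR ^ 2 * Cmod hRR ^ 2)
    by (apply Rmult_le_pos; [apply Rmult_le_pos; [lra | apply pow2_ge_0] | apply pow2_ge_0]).
  lra.
Qed.

Lemma Gk_pos hSR hRR sigmaR zeta pS pR :
  0 < sigmaR -> 0 <= zeta -> 0 < Gk hSR hRR sigmaR zeta pS pR.
Proof.
  intros hsR hz; unfold Gk.
  apply Rinv_0_lt_compat, sqrt_lt_R0.
  pose proof (Gk_radicand_ge hSR hRR sigmaR zeta pS pR hz).
  pose proof (pow_lt sigmaR 2 hsR); lra.
Qed.

Lemma Gk_le_inv hSR hRR sigmaR zeta pS pR :
  0 < sigmaR -> 0 <= zeta -> Gk hSR hRR sigmaR zeta pS pR <= / sigmaR.
Proof.
  intros hsR hz; unfold Gk.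
  apply Rinv_le_contravar; [lra|].
  rewrite <- (sqrt_pow2 sigmaR) at 1 by lra.
  apply sqrt_le_1_alt, Gk_radicand_ge, hz.
Qed.

Lemma Cmod_Acoh_le hSP hRP zeta pS pR :
  0 <= pS -> 0 <= pR ->
  Cmod (Acoh hSP hRP zeta pS pR) <= Cmod hSP * pS + Cmod hRP * sqrt zeta * pR.
Proof.
  intros hpS hpR; unfold Acoh.
  eapply Rle_trans; [apply Cmod_triangle|].
  rewrite !Cmod_mult, !Cmod_R, !Rabs_pos_eq; auto using sqrt_pos; lra.
Qed.

Lemma Cmod_1_plus_i : Cmod (1 + Ci) = sqrt 2.
Proof. unfold Cmod; simpl; f_equal; ring. Qed.

Lemma Cmod_Bcoh_le hSR hRR hRP sigmaR zeta pS pR :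
  0 < sigmaR -> 0 <= zeta -> 0 <= pS -> 0 <= pR ->
  Cmod (Bcoh hSR hRR hRP sigmaR zeta pS pR) <=
    (Cmod hSR * pS + Cmod hRR * sqrt zeta * pR + sigmaR) / sigmaR * Cmod hRP * pR.
Proof.
  intros hsR hz hpS hpR; unfold Bcoh.
  pose proof (Gk_pos hSR hRR sigmaR zeta pS pR hsR hz).
  pose proof (Gk_le_inv hSR hRR sigmaR zeta pS pR hsR hz).
  set (G := Gk hSR hRR sigmaR zeta pS pR) in *.
  set (w := (hSR * pS + hRR * sqrt zeta * pR + RtoC (sigmaR / sqrt 2) * (1 + Ci))%C).
  assert (hw : Cmod w <= Cmod hSR * pS + Cmod hRR * sqrt zeta * pR + sigmaR).
  { assert (0 < sqrt 2) by (apply sqrt_lt_R0; lra).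
    unfold w; eapply Rle_trans; [apply Cmod_triangle|].
    eapply Rle_trans; [apply Rplus_le_compat_r, Cmod_triangle|].
    rewrite !Cmod_mult, !Cmod_R, Cmod_1_plus_i, !Rabs_pos_eq;
      auto using sqrt_pos; try (apply Rlt_le, Rdiv_lt_0_compat; lra).
    replace (sigmaR / sqrt 2 * sqrt 2) with sigmaR by (field; lra); lra. }
  rewrite !Cmod_mult, !Cmod_R, !(Rabs_pos_eq G), (Rabs_pos_eq pR) by lra.
  pose proof (Cmod_ge_0 w); pose proof (Cmod_ge_0 hRP).
  apply Rmult_le_compat_r; [lra|]; apply Rmult_le_compat_r; [lra|].
  unfold Rdiv; apply Rmult_le_compat; lra.
Qed.

Lemma Icoh_diag_quadratic hSR hRR hSP hRP sigmaR zeta :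
  0 < sigmaR -> 0 <= zeta ->
  exists L, 0 <= L /\ forall r, 0 <= r <= 1 ->
    Icoh hSR hRR hSP hRP sigmaR zeta r r <= (L * r) ^ 2.
Proof.
  intros hsR hz.
  pose proof (Cmod_ge_0 hSP); pose proof (Cmod_ge_0 hRP); pose proof (Cmod_ge_0 hSR).
  assert (0 <= Cmod hRR * sqrt zeta)
    by (apply Rmult_le_pos; [apply Cmod_ge_0 | apply sqrt_pos]).
  assert (0 <= Cmod hRP * sqrt zeta) by (apply Rmult_le_pos; [lra | apply sqrt_pos]).
  set (K := Cmod hSR + Cmod hRR * sqrt zeta + sigmaR).
  assert (0 <= K / sigmaR * Cmod hRP)
    by (apply Rmult_le_pos; [apply Rlt_le, Rdiv_lt_0_compat; unfold K|]; lra).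
  exists (Cmod hSP + Cmod hRP * sqrt zeta + K / sigmaR * Cmod hRP); split; [lra|].
  intros r hr; unfold Icoh.
  pose proof (Cmod_Acoh_le hSP hRP zeta r r ltac:(lra) ltac:(lra)).
  pose proof (Cmod_Bcoh_le hSR hRR hRP sigmaR zeta r r hsR hz ltac:(lra) ltac:(lra)).
  assert (hK : (Cmod hSR * r + Cmod hRR * sqrt zeta * r + sigmaR) / sigmaR * Cmod hRP * r
                <= K / sigmaR * Cmod hRP * r).
  { apply Rmult_le_compat_r; [lra|]; apply Rmult_le_compat_r; [lra|].
    unfold Rdiv; apply Rmult_le_compat_r; [apply Rlt_le, Rinv_0_lt_compat; lra|].
    unfold K; nra. }
  set (u := Cmod (Acoh hSP hRP zeta r r)) in *.
  set (v := Cmod (Bcoh hSR hRR hRP sigmaR zeta r r)) in *.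
  assert (0 <= u) by apply Cmod_ge_0; assert (0 <= v) by apply Cmod_ge_0.
  apply pow_maj_Rabs, Rle_trans with (u + v).
  - unfold Rabs; destruct (Rcase_abs (u - v)); lra.
  - lra.
Qed.

Lemma feasible_diag_near_origin hSR hRR hSP hRP sigmaR zeta IP PSmax PRmax :
  0 < sigmaR -> 0 <= zeta -> 0 < IP -> 0 < PSmax -> 0 < PRmax ->
  exists m, 0 < m /\ forall r, 0 < r <= m ->
    feasible hSR hRR hSP hRP sigmaR zeta IP PSmax PRmax (r, r).
Proof.
  intros hsR hz hIP hPS hPR.
  destruct (Icoh_diag_quadratic hSR hRR hSP hRP sigmaR zeta hsR hz) as [L [hL hIcoh]].
  pose proof (sqrt_lt_R0 _ hIP); pose proof (sqrt_lt_R0 _ hPS); pose proof (sqrt_lt_R0 _ hPR).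
  exists (Rmin (Rmin 1 (sqrt IP / (L + 1))) (Rmin (sqrt PSmax) (sqrt PRmax))); split.
  - repeat apply Rmin_pos; try apply Rdiv_lt_0_compat; lra.
  - intros r [hr hrm].
    pose proof (Rle_trans _ _ _ hrm (Rmin_l _ _)) as hr1.
    pose proof (Rle_trans _ _ _ hrm (Rmin_r _ _)) as hr2.
    pose proof (Rle_trans _ _ _ hr1 (Rmin_l _ _)); pose proof (Rle_trans _ _ _ hr1 (Rmin_r _ _)).
    pose proof (Rle_trans _ _ _ hr2 (Rmin_l _ _)); pose proof (Rle_trans _ _ _ hr2 (Rmin_r _ _)).
    assert (hLr : L * r <= sqrt IP).
    { replace (sqrt IP) with (sqrt IP / (L + 1) * (L + 1)) by (field; lra); nra. }
    unfold feasible; split; [|lra].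
    apply Rle_trans with ((L * r) ^ 2); [apply hIcoh; lra|].
    rewrite <- (pow2_sqrt IP) by lra.
    apply pow_incr; split; [apply Rmult_le_pos|]; lra.
Qed.

Theorem lemma4 (hSR hRD hSP hRP hRR : C) (sigmaD sigmaR zeta IP PSmax PRmax : R)
  (hsD : 0 < sigmaD) (hsR : 0 < sigmaR) (hz : 0 <= zeta)
  (hzhat : 0 < (Cmod hRR)^2 * zeta)
  (hIP : 0 < IP) (hPS : 0 < PSmax) (hPR : 0 < PRmax)
  (hSR0 : hSR <> 0%C) (hRD0 : hRD <> 0%C) :
  ~ convex_max_problem
      (feasible hSR hRR hSP hRP sigmaR zeta IP PSmax PRmax)
      (fun p => Cbreve hSR hRD hRR sigmaD zeta (fst p) (snd p)).
Proof.
  intros [_ Hconcave].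
  destruct (feasible_diag_near_origin hSR hRR hSP hRP sigmaR zeta IP PSmax PRmax)
    as [m [hm Hfeas]]; auto.
  set (a := Cmod hRD ^ 2 / sigmaD ^ 2).
  set (y := Cmod hSR ^ 2 / (Cmod hRR ^ 2 * zeta)).
  assert (ha : 0 < a) by (apply Rdiv_lt_0_compat; apply pow_lt; [apply Cmod_gt_0|]; auto).
  assert (hy : 0 < y) by (apply Rdiv_lt_0_compat; [apply pow_lt, Cmod_gt_0|]; auto).
  set (e := Rmin (m / 3) (/ (11 * a + 1))).
  assert (he : 0 < e) by (apply Rmin_pos; [|apply Rinv_0_lt_compat]; lra).
  assert (he3 : 3 * e <= m)
    by (pose proof (Rmin_l (m / 3) (/ (11 * a + 1))) as hle; fold e in hle; lra).
  assert (hsmall : 11 * (a * e ^ 2) < 1 + y).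
  { assert (e * (11 * a + 1) <= 1).
    { pose proof (Rmult_le_compat_r (11 * a + 1) _ _ ltac:(lra)
                    (Rmin_r (m / 3) (/ (11 * a + 1)))) as hle.
      rewrite Rinv_l in hle by lra; exact hle. }
    assert (0 < a * e) by nra.
    replace (e ^ 2) with (e * e) by ring; nra. }
  pose proof (Hconcave (e, e) (3 * e, 3 * e) (/ 2)
                (Hfeas e ltac:(lra)) (Hfeas (3 * e) ltac:(lra)) ltac:(lra)) as Hmid.
  simpl in Hmid.
  replace (/ 2 * e + (1 - / 2) * (3 * e)) with (2 * e) in Hmid by field.
  rewrite !Cbreve_diag in Hmid by lra; fold a y in Hmid.
  pose proof (diag_objective_midpoint_lt a y e ha hy he hsmall); lra.
Qed.
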